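(* For every graph $G$ and integer $m\ge 1$, the generalised windmill $W^{(m)}_G=K_1+\bigcup_{i=1}^m G_i$, where $G_1,\dots,G_m$ are vertex-disjoint copies of $G$, satisfies $f^-(W^{(m)}_G)=m\cdot f^-(G)$ and $f^+(W^{(m)}_G)=m\cdot f^+(G)$.
   Context: All graphs are finite, simple, undirected and connected. $N[v]=N(v)\cup\{v\}$ is the closed neighbourhood. A chromatic colouring of $G$ is a proper vertex colouring $c:V(G)\to\{c_1,\dots,c_{\chi(G)}\}$. With respect to $c$, a vertex $v$ yields a rainbow neighbourhood if $N[v]$ contains a vertex of each colour $c_1,\dots,c_{\chi(G)}$; $r_\chi(G)$ is the number of such vertices, and $r^-_\chi(G)$, $r^+_\chi(G)$ are its minimum and maximum over all chromatic colourings of $G$. Fading: for a set $F\subseteq V(G)$ (a fade set), the vertices of $F$ receive a transparent colour $c^\circ$ not among $c_1,\dots,c_{\chi(G)}$; after fading, $v$ yields a rainbow neighbourhood iff for every $i$ some vertex of $N[v]\setminus F$ has colour $c_i$. The fading number $f^-(G)$ is the maximum $|F|$ over chromatic colourings $c$ attaining $r_\chi=r^-_\chi(G)$ and fade sets $F$ such that, after fading $F$, the number of vertices yielding rainbow neighbourhoods is still $r^-_\chi(G)$; $f^+(G)$ is defined analogously with $r^+_\chi(G)$. The join $G_1+G_2$ of vertex-disjoint graphs is $G_1\cup G_2$ together with all edges joining a vertex of $G_1$ to a vertex of $G_2$. *)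

(* Graphs: finite type T with a symmetric irreflexive relation e. *)
From mathcomp Require Import all_boot.
Set Implicit Arguments. Unset Strict Implicit. Unset Printing Implicit Defensive.

Section Defs.
Variables (T : finType) (e : rel T).

Definition proper_col (k : nat) (c : T -> 'I_k) : bool :=
  [forall x, forall y, e x y ==> (c x != c y)].

(* chromatic number: least k admitting a proper k-colouring
   (default #|T|, which is always achievable) *)
Definition chi : nat :=
  \big[minn/#|T|]_(k < #|T|.+1 | [exists c : {ffun T -> 'I_k}, proper_col c]) k.

Definition cnbhd (v : T) : {set T} := [set u | (u == v) || e v u].

Definition rainbowF (c : T -> 'I_chi) (F : {set T}) (v : T) : bool :=
  [forall i : 'I_chi, exists u, [&& u \in cnbhd v, u \notin F & c u == i]].

Definition rcount (c : T -> 'I_chi) (F : {set T}) : nat :=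
  #|[set v | rainbowF c F v]|.

(* r_chi(G) for colouring c is rcount c set0; chromatic colourings are the
   proper colourings with chi colours *)
Definition r_minus : nat :=
  \big[minn/#|T|]_(c : {ffun T -> 'I_chi} | proper_col c) rcount c set0.
Definition r_plus : nat :=
  \big[maxn/0]_(c : {ffun T -> 'I_chi} | proper_col c) rcount c set0.

Definition f_minus : nat :=
  \big[maxn/0]_(c : {ffun T -> 'I_chi} | proper_col c && (rcount c set0 == r_minus))
    \big[maxn/0]_(F : {set T} | rcount c F == r_minus) #|F|.
Definition f_plus : nat :=
  \big[maxn/0]_(c : {ffun T -> 'I_chi} | proper_col c && (rcount c set0 == r_plus))
    \big[maxn/0]_(F : {set T} | rcount c F == r_plus) #|F|.

End Defs.

(* Generalised windmill K_1 + (G_1 u ... u G_m): None is the K_1 vertex,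
   Some (i, x) is vertex x of the i-th copy. *)
Definition windmill_rel (m : nat) {T : finType} (e : rel T) : rel (option ('I_m * T)) :=
  fun u v => match u, v with
  | None, None => false
  | None, Some _ => true
  | Some _, None => true
  | Some (i, x), Some (j, y) => (i == j) && e x y
  end.
Arguments windmill_rel m {T} e.

From mathcomp Require Import all_boot zify.
Set Implicit Arguments. Unset Strict Implicit. Unset Printing Implicit Defensive.

(* A proper colouring of the windmill with chi(G) + 1 colours gives the centre a
   colour of its own, so it amounts to a chromatic colouring of every copy of G.
   The centre always yields a rainbow neighbourhood (a chromatic colouring of a copy
   has a rainbow vertex, whose neighbourhood shows every colour), and a vertex of a
   copy does so exactly when it does within its copy.  Hence r(W) = 1 + sum of the
   r(G_i), so r^-(W) = 1 + m r^-(G), r^+(W) = 1 + m r^+(G), and in an extremal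
   colouring of W every copy is extremal.  Fading the centre destroys all rainbow
   neighbourhoods, so the admissible fade sets of W are exactly the unions of
   admissible fade sets of the copies. *)

Lemma leq_bigminn_cond (I : finType) (P : pred I) (F : I -> nat) d i0 :
  P i0 -> \big[minn/d]_(i | P i) F i <= F i0.
Proof.
move=> Pi0; have : i0 \in index_enum I by rewrite mem_index_enum.
elim: (index_enum I) => // j r IHr; rewrite inE big_cons => /predU1P[<-|/IHr].
  by rewrite Pi0 geq_minl.
by case: (P j) => // le_r; rewrite geq_min le_r orbT.
Qed.

Lemma bigminn_exists (I : finType) (P : pred I) (F : I -> nat) d i0 :
  P i0 -> (forall i, P i -> F i <= d) ->
  exists2 i, P i & \big[minn/d]_(i | P i) F i = F i.
Proof.
move=> Pi0 leFd; case: (arg_minnP F Pi0) => i Pi minFi; exists i => //.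
apply/eqP; rewrite eqn_leq leq_bigminn_cond //=.
elim/big_ind: _ => [|x y lex ley|j /minFi //]; first exact: leFd.
by rewrite leq_min lex.
Qed.
Arguments bigminn_exists [I P] F [d] i0.

Lemma bigmaxn_exists (I : finType) (P : pred I) (F : I -> nat) i0 :
  P i0 -> exists2 i, P i & \max_(i | P i) F i = F i.
Proof. by move=> Pi0; rewrite (bigmax_eq_arg i0) //; case: arg_maxnP => // i; exists i. Qed.
Arguments bigmaxn_exists [I P] F i0.

Lemma sum_nat_const_ord m r : \sum_(i < m) r = m * r.
Proof. by rewrite sum_nat_const card_ord. Qed.

Lemma leq_sum_eq (I : finType) (E1 E2 : I -> nat) :
  (forall i, E1 i <= E2 i) -> \sum_i E2 i <= \sum_i E1 i -> E1 =1 E2.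
Proof.
move=> leE12 leS i.
have [_ eqS] := leqif_sum (fun i (_ : xpredT i) => leqif_eq (leE12 i)).
have : \sum_i E1 i == \sum_i E2 i by rewrite eqn_leq leS leq_sum.
by rewrite eqS => /forallP/(_ i)/eqP.
Qed.

Lemma card_option_pair (I X : finType) (P : pred (option (I * X))) :
  #|[set w | P w]| = P None + \sum_i #|[set x | P (Some (i, x))]|.
Proof.
rewrite -sum1_card big_mkcond /= (bigD1 None) //= inE; congr (_ + _).
rewrite (reindex_omap Some id) /=; last by case=> [w _|].
rewrite (eq_bigl xpredT) => [|w]; last by rewrite eqxx.
transitivity (\sum_i \sum_x (if P (Some (i, x)) then 1 else 0)).
  by rewrite pair_big; apply: eq_bigr => -[i x] _; rewrite inE.
apply: eq_bigr => i _; rewrite -(@sum1_card X) [RHS]big_mkcond.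
by apply: eq_bigr => x _; rewrite inE.
Qed.

Lemma ltn_ord_max k (i : 'I_k.+1) : i != ord_max -> i < k.
Proof. by rewrite -val_eqE /=; have := ltn_ord i; lia. Qed.

Section Colouring.
Variables (T : finType) (e : rel T).

Definition rainbow k (c : T -> 'I_k) (F : {set T}) v :=
  [forall i : 'I_k, exists u, [&& u \in cnbhd e v, u \notin F & c u == i]].

Definition nrainbow k (c : T -> 'I_k) F := #|[set v | rainbow c F v]|.

Definition nrainbow_min k :=
  \big[minn/#|T|]_(c : {ffun T -> 'I_k} | proper_col e c) nrainbow c set0.
Definition nrainbow_max k :=
  \big[maxn/0]_(c : {ffun T -> 'I_k} | proper_col e c) nrainbow c set0.
Definition fading k r :=
  \big[maxn/0]_(c : {ffun T -> 'I_k} | proper_col e c && (nrainbow c set0 == r))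
    \big[maxn/0]_(F : {set T} | nrainbow c F == r) #|F|.

Lemma f_minusE : f_minus e = fading (chi e) (nrainbow_min (chi e)).
Proof. by []. Qed.

Lemma f_plusE : f_plus e = fading (chi e) (nrainbow_max (chi e)).
Proof. by []. Qed.

Lemma proper_colP k (c : T -> 'I_k) :
  reflect (forall x y, e x y -> c x != c y) (proper_col e c).
Proof.
apply: (iffP forallP) => [c_pr x y | c_pr x]; first by move/forallP/(_ y)/implyP: (c_pr x).
by apply/forallP => y; apply/implyP/c_pr.
Qed.

Lemma rainbow_fade k (c : T -> 'I_k) (F F' : {set T}) v :
  F \subset F' -> rainbow c F' v -> rainbow c F v.
Proof.
move=> sFF' /forallP rb_v; apply/forallP => i; have /existsP[u /and3P[uv uF' cu]] := rb_v i.
by apply/existsP; exists u; rewrite uv cu andbT; apply: contra uF'; apply/subsetP.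
Qed.

Lemma nrainbow_fade k (c : T -> 'I_k) (F F' : {set T}) :
  F \subset F' -> nrainbow c F' <= nrainbow c F.
Proof.
by move=> sFF'; apply/subset_leq_card/subsetP => v; rewrite !inE; apply: rainbow_fade.
Qed.

Lemma chi_le_card : chi e <= #|T|.
Proof.
rewrite /chi; elim/big_ind: _ => [//|x y le_x _|k _]; last exact: leq_ord.
by rewrite geq_min le_x.
Qed.

Lemma chi_min_nat k (c : T -> nat) :
  (forall x, c x < k) -> (forall x y, e x y -> c x != c y) -> chi e <= k.
Proof.
move=> lt_ck c_pr; have [le_kT | /ltnW/(leq_trans chi_le_card)//] := leqP k #|T|.
rewrite -ltnS in le_kT.
apply: (@leq_bigminn_cond _ _ (fun i : 'I_#|T|.+1 => val i) _ (Ordinal le_kT)) => /=.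
apply/existsP; exists [ffun x => Ordinal (lt_ck x)]; apply/proper_colP => x y exy.
by rewrite !ffunE -val_eqE /= c_pr.
Qed.

Lemma chi_min k (c : T -> 'I_k) : proper_col e c -> chi e <= k.
Proof.
move/proper_colP=> c_pr; apply: (@chi_min_nat k (fun x => val (c x))) => [x|x y /c_pr].
  exact: ltn_ord.
by rewrite val_eqE.
Qed.

Lemma chromatic_ex : irreflexive e -> exists c : {ffun T -> 'I_(chi e)}, proper_col e c.
Proof.
move=> irr; pose colourable (k : 'I_#|T|.+1) := [exists c : {ffun T -> 'I_k}, proper_col e c].
have colourable_card : colourable ord_max.
  apply/existsP; exists [ffun x => enum_rank x]; apply/proper_colP => x y.
  by rewrite !ffunE; apply: contraTN => /eqP/enum_rank_inj->; rewrite irr.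
have [k /existsP col_k] := bigminn_exists (fun k : 'I_#|T|.+1 => nat_of_ord k) ord_max
  colourable_card (fun k _ => leq_ord k).
by rewrite /chi => ->.
Qed.

Lemma nrainbow_min_exists k (c0 : {ffun T -> 'I_k}) : proper_col e c0 ->
  exists2 c : {ffun T -> 'I_k}, proper_col e c & nrainbow_min k = nrainbow c set0.
Proof. by move=> c0_pr; apply: (bigminn_exists _ _ c0_pr) => c _; apply: max_card. Qed.

Lemma nrainbow_max_exists k (c0 : {ffun T -> 'I_k}) : proper_col e c0 ->
  exists2 c : {ffun T -> 'I_k}, proper_col e c & nrainbow_max k = nrainbow c set0.
Proof. by move=> c0_pr; apply: (bigmaxn_exists _ _ c0_pr). Qed.

End Colouring.

Section Rainbow.
Variables (T : finType) (e : rel T).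
Hypothesis sym : symmetric e.

(* The vertices of the last colour form an independent set, so each of them can be
   recoloured with a colour missing from its closed neighbourhood. *)
Lemma chi_le_recolour k (c : T -> 'I_k.+1) : proper_col e c ->
  (forall v, c v = ord_max -> ~~ rainbow e c set0 v) -> chi e <= k.
Proof.
move=> /proper_colP c_pr top_miss.
pose miss v := [pick i | [forall u in cnbhd e v, c u != i]].
have missP v : c v = ord_max ->
    exists2 i, miss v = Some i & forall u, u \in cnbhd e v -> c u != i.
  move=> cv; rewrite /miss; case: pickP => [i /forall_inP | none]; first by exists i.
  have /forallPn[i /existsPn hi] := top_miss v cv.
  have /negbT/forall_inPn[u uv] := none i; rewrite negbK => /eqP cu.
  by have := hi u; rewrite uv in_set0 cu eqxx.
pose c' v := if c v == ord_max then odflt ord_max (miss v) else c v.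
apply: (@chi_min_nat _ _ k (fun v => val (c' v))) => [v | x y exy].
  apply: ltn_ord_max; rewrite /c'; case: (c v =P ord_max) => [cv | /eqP //].
  by have [i -> hi] := missP v cv; rewrite /= eq_sym -cv hi // inE eqxx.
have cxy := c_pr x y exy; rewrite val_eqE /c'.
case: (c x =P ord_max) => [cx|_]; case: (c y =P ord_max) => [cy|_] //.
- by rewrite cx cy eqxx in cxy.
- by have [i -> hi] := missP x cx; rewrite /= eq_sym hi // inE exy orbT.
- by have [i -> hi] := missP y cy; rewrite /= hi // inE sym exy orbT.
Qed.

Lemma chromatic_rainbow k (c : T -> 'I_k) : proper_col e c -> chi e = k ->
  0 < #|T| -> exists v, rainbow e c set0 v.
Proof.
case: k c => [c _ _ /card_gt0P[x _] | k c c_pr chi_k _]; first by case: (c x).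
apply/existsP/negbNE/negP; rewrite negb_exists => /forallP none.
by have := chi_le_recolour c_pr (fun v _ => none v); rewrite chi_k ltnn.
Qed.

Lemma chromatic_colour_unfaded k (c : T -> 'I_k) (F : {set T}) :
  proper_col e c -> chi e = k -> nrainbow e c F = nrainbow e c set0 ->
  forall j : 'I_k, exists2 y, y \notin F & c y = j.
Proof.
move=> c_pr chi_k eqF j.
have T_gt0 : 0 < #|T| by have := chi_le_card e; have := ltn_ord j; lia.
have [v rb_v] := chromatic_rainbow c_pr chi_k T_gt0.
have : v \in [set v | rainbow e c F v].
  have /(subset_cardP eqF) -> : [set v | rainbow e c F v] \subset [set v | rainbow e c set0 v].
    by apply/subsetP => u; rewrite !inE; apply: rainbow_fade (sub0set F).
  by rewrite inE.
rewrite inE => /forallP/(_ j)/existsP[y /and3P[_ yF /eqP cy]]; by exists y.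
Qed.

End Rainbow.

Section Windmill.
Variables (T : finType) (e : rel T) (m : nat).
Local Notation W := (option ('I_m * T)).
Local Notation eW := (windmill_rel m e).

Lemma windmill_irr : irreflexive e -> irreflexive eW.
Proof. by move=> irr [[i x]|] //=; rewrite irr andbF. Qed.

Definition fibre (F : {set W}) i : {set T} := [set x | Some (i, x) \in F].

Lemma card_fibres (F : {set W}) : None \notin F -> #|F| = \sum_i #|fibre F i|.
Proof.
move=> NF; have FE : F = [set w | w \in F] by apply/setP => w; rewrite inE.
by rewrite {1}FE card_option_pair (negbTE NF) add0n.
Qed.

Section Decomposition.
Variables (k : nat) (d : W -> 'I_k.+1) (c : 'I_m -> T -> 'I_k).
Hypothesis dE : forall i x, d (Some (i, x)) = lift (d None) (c i x).

Lemma nrainbow_faded_centre (F : {set W}) : None \in F -> nrainbow eW d F = 0.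
Proof.
move=> NF; apply/eqP; rewrite cards_eq0; apply/eqP/setP => w; rewrite !inE.
apply/negbTE/forallPn; exists (d None); apply/existsPn => -[[i x]|].
  by rewrite dE eq_sym (negbTE (neq_lift _ _)) !andbF.
by rewrite NF andbF.
Qed.

Lemma rainbow_copy (F : {set W}) i x : None \notin F ->
  rainbow eW d F (Some (i, x)) = rainbow e (c i) (fibre F i) x.
Proof.
move=> NF; apply/forallP/forallP => rb j.
  have /existsP[[[i' y]|] /and3P[yx yF /eqP dy]] := rb (lift (d None) j).
    move: dy; rewrite dE => /lift_inj cy; move: yx; rewrite !inE /= => yx.
    have ii' : i' = i by case/orP: yx => [/eqP[->] | /andP[/eqP]].
    subst i'; apply/existsP; exists y; rewrite !inE yF cy eqxx !andbT.
    by case/orP: yx => [/eqP[->] | /andP[_ ->]]; rewrite ?eqxx ?orbT.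
  by move/eqP: dy; rewrite (negbTE (neq_lift _ _)).
case: (unliftP (d None) j) => [j' ->|->].
  have /existsP[y /and3P[yx yF /eqP cy]] := rb j'; apply/existsP; exists (Some (i, y)).
  move: yx yF; rewrite !inE dE cy /= !eqxx andbT => /orP[/eqP-> | ->] ->; by rewrite ?eqxx ?orbT.
by apply/existsP; exists None; rewrite NF eqxx !inE.
Qed.

Lemma rainbow_centre (F : {set W}) : None \notin F ->
  (forall j : 'I_k, exists i, exists2 y, y \notin fibre F i & c i y = j) ->
  rainbow eW d F None.
Proof.
move=> NF seen; apply/forallP => j; apply/existsP; case: (unliftP (d None) j) => [j' ->|->].
  have [i [y yF cy]] := seen j'; exists (Some (i, y)).
  by move: yF; rewrite !inE dE cy eqxx /= => ->.
by exists None; rewrite NF !inE !eqxx.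
Qed.

Lemma nrainbow_windmill (F : {set W}) : None \notin F ->
  nrainbow eW d F = rainbow eW d F None + \sum_i nrainbow e (c i) (fibre F i).
Proof.
move=> NF; rewrite /nrainbow card_option_pair; congr (_ + _).
by apply: eq_bigr => i _; apply: eq_card => x; rewrite !inE rainbow_copy.
Qed.

End Decomposition.

Variable k : nat.

(* The default [c0] is never used when [d] is proper, as the centre's colour
   then does not occur in the copies. *)
Definition copy_col (c0 : T -> 'I_k) (d : W -> 'I_k.+1) i : {ffun T -> 'I_k} :=
  [ffun x => odflt (c0 x) (unlift (d None) (d (Some (i, x))))].

Lemma copy_colE c0 d i x : proper_col eW d ->
  d (Some (i, x)) = lift (d None) (copy_col c0 d i x).
Proof.
move/proper_colP=> d_pr; rewrite ffunE; case: unliftP => [j -> | dx] //.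
by have := d_pr None (Some (i, x)) isT; rewrite dx eqxx.
Qed.

Lemma copy_col_proper c0 d i : proper_col eW d -> proper_col e (copy_col c0 d i).
Proof.
move=> d_pr; have dE := copy_colE c0 _ _ d_pr; move/proper_colP: d_pr => d_pr.
apply/proper_colP => x y exy; have := d_pr (Some (i, x)) (Some (i, y)).
by rewrite /= eqxx exy !dE => /(_ isT); apply: contra => /eqP ->.
Qed.

Definition windmill_col (c : T -> 'I_k) : {ffun W -> 'I_k.+1} :=
  [ffun w => if w is Some (_, x) then lift ord_max (c x) else ord_max].

Lemma windmill_colE c i x :
  windmill_col c (Some (i, x)) = lift (windmill_col c None) (c x).
Proof. by rewrite !ffunE. Qed.

Lemma windmill_col_proper c : proper_col e c -> proper_col eW (windmill_col c).
Proof.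
move/proper_colP=> c_pr; apply/proper_colP => -[[i x]|] [[j y]|] //= exy; rewrite !ffunE.
- by case/andP: exy => _ /c_pr; apply: contra => /eqP/lift_inj ->.
- by rewrite eq_sym neq_lift.
- by rewrite neq_lift.
Qed.

Definition windmill_set (F : {set T}) : {set W} :=
  [set w | if w is Some (_, x) then x \in F else false].

Lemma centre_notin_windmill_set F : None \notin windmill_set F.
Proof. by rewrite inE. Qed.

Lemma windmill_set0 : windmill_set set0 = set0.
Proof. by apply/setP => -[[i x]|]; rewrite !inE. Qed.

Lemma fibre_windmill_set F i : fibre (windmill_set F) i = F.
Proof. by apply/setP => x; rewrite !inE. Qed.

End Windmill.

Section WindmillFading.
Variables (T : finType) (e : rel T) (m : nat).
Hypotheses (sym : symmetric e) (irr : irreflexive e) (m_gt0 : 0 < m).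
Local Notation W := (option ('I_m * T)).
Local Notation eW := (windmill_rel m e).
Local Notation n := (chi e).

Lemma chi_windmill : chi eW = n.+1.
Proof.
have [c0 c0_pr] := chromatic_ex irr.
apply/eqP; rewrite eqn_leq (chi_min (windmill_col_proper m c0_pr)) /=.
have [d /proper_colP d_pr] := chromatic_ex (windmill_irr (m:=m) irr).
pose i0 := Ordinal m_gt0; pose h := val (d None).
have dh x : val (d (Some (i0, x))) != h by rewrite val_eqE eq_sym d_pr.
suff : n <= (chi eW).-1 by have := ltn_ord (d None); lia.
apply: (@chi_min_nat _ _ _ (fun x => unbump h (d (Some (i0, x))))) => [x | x y exy].
  have := dh x; have := ltn_ord (d None); have := ltn_ord (d (Some (i0, x))).
  by rewrite /unbump -/h; case: ltnP => /=; lia.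
apply: contra (d_pr (Some (i0, x)) (Some (i0, y)) _) => [/eqP dxy|]; last by rewrite /= ?eqxx exy.
by apply/eqP/val_inj; apply: (can_in_inj (@unbumpK h)) dxy; rewrite inE dh.
Qed.

Lemma rainbow_centre_chromatic (d : W -> 'I_n.+1) (c : 'I_m -> T -> 'I_n) (F : {set W}) :
  (forall i x, d (Some (i, x)) = lift (d None) (c i x)) -> None \notin F ->
  (exists i, proper_col e (c i) /\ nrainbow e (c i) (fibre F i) = nrainbow e (c i) set0) ->
  rainbow eW d F None.
Proof.
move=> dE NF [i [ci_pr ci_F]]; apply: (rainbow_centre e dE NF) => j.
by exists i; apply: chromatic_colour_unfaded ci_F j.
Qed.

Lemma fibre0 i : fibre (set0 : {set W}) i = set0.
Proof. by apply/setP => x; rewrite !inE. Qed.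

Lemma nrainbow_windmill0 (c0 : T -> 'I_n) (d : W -> 'I_n.+1) : proper_col eW d ->
  nrainbow eW d set0 = 1 + \sum_i nrainbow e (copy_col c0 d i) set0.
Proof.
move=> d_pr; have dE i x := copy_colE c0 i x d_pr.
rewrite (nrainbow_windmill e dE (negbT (in_set0 None))); congr (_ + _).
  rewrite (rainbow_centre_chromatic dE (negbT (in_set0 None))) //.
  by exists (Ordinal m_gt0); rewrite fibre0 copy_col_proper.
by apply: eq_bigr => i _; rewrite fibre0.
Qed.

Lemma nrainbow_windmill_col (c : T -> 'I_n) (F : {set T}) :
  proper_col e c -> nrainbow e c F = nrainbow e c set0 ->
  nrainbow eW (windmill_col m c) (windmill_set m F) = 1 + m * nrainbow e c F.
Proof.
move=> c_pr c_F; have dE := @windmill_colE _ m _ c.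
rewrite (nrainbow_windmill e dE (centre_notin_windmill_set m F)); congr (_ + _).
  rewrite (rainbow_centre_chromatic dE (centre_notin_windmill_set m F)) //.
  by exists (Ordinal m_gt0); rewrite fibre_windmill_set.
rewrite (eq_bigr (fun=> nrainbow e c F)) => [|i _]; last by rewrite fibre_windmill_set.
by rewrite sum_nat_const_ord.
Qed.

Lemma nrainbow_min_windmill : nrainbow_min eW n.+1 = 1 + m * nrainbow_min e n.
Proof.
have [c0 c0_pr] := chromatic_ex irr.
have [cG cG_pr minG] := nrainbow_min_exists c0_pr.
have [d d_pr minW] := nrainbow_min_exists (windmill_col_proper m c0_pr).
apply/eqP; rewrite eqn_leq; apply/andP; split.
  rewrite minG -(nrainbow_windmill_col cG_pr erefl) windmill_set0.
  exact: leq_bigminn_cond (windmill_col_proper m cG_pr).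
rewrite minW (nrainbow_windmill0 c0 d_pr) leq_add2l -sum_nat_const_ord.
by apply: leq_sum => i _; apply: leq_bigminn_cond; apply: copy_col_proper.
Qed.

Lemma nrainbow_max_windmill : nrainbow_max eW n.+1 = 1 + m * nrainbow_max e n.
Proof.
have [c0 c0_pr] := chromatic_ex irr.
have [cG cG_pr maxG] := nrainbow_max_exists c0_pr.
have [d d_pr maxW] := nrainbow_max_exists (windmill_col_proper m c0_pr).
apply/eqP; rewrite eqn_leq; apply/andP; split.
  rewrite maxW (nrainbow_windmill0 c0 d_pr) leq_add2l -sum_nat_const_ord.
  by apply: leq_sum => i _; apply: leq_bigmax_cond; apply: copy_col_proper.
rewrite maxG -(nrainbow_windmill_col cG_pr erefl) windmill_set0.
exact: leq_bigmax_cond (windmill_col_proper m cG_pr).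
Qed.

Lemma fading_windmill_ge r : m * fading e n r <= fading eW n.+1 (1 + m * r).
Proof.
rewrite /fading; elim/big_ind: _ => [|x y le_x le_y|c /andP[c_pr /eqP c_r]]; first by rewrite muln0.
  by rewrite maxnMr geq_max le_x le_y.
elim/big_ind: _ => [|x y le_x le_y|F /eqP c_F]; first by rewrite muln0.
  by rewrite maxnMr geq_max le_x le_y.
have c_F0 : nrainbow e c F = nrainbow e c set0 by rewrite c_F c_r.
apply: (bigmax_sup (windmill_col m c)).
  by rewrite windmill_col_proper //= -windmill_set0 nrainbow_windmill_col ?c_r.
apply: (bigmax_sup (windmill_set m F)); first by rewrite nrainbow_windmill_col ?c_F.
rewrite card_fibres ?centre_notin_windmill_set // -sum_nat_const_ord.
by apply: eq_leq; apply: eq_bigr => i _; rewrite fibre_windmill_set.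
Qed.

Lemma fading_windmill_le (c0 : T -> 'I_n) r :
  (forall d : {ffun W -> 'I_n.+1}, proper_col eW d -> nrainbow eW d set0 = 1 + m * r ->
     forall i, nrainbow e (copy_col c0 d i) set0 = r) ->
  fading eW n.+1 (1 + m * r) <= m * fading e n r.
Proof.
move=> extremal; apply/bigmax_leqP => d /andP[d_pr /eqP d_r].
apply/bigmax_leqP => F /eqP d_F; have dE i x := copy_colE c0 i x d_pr.
have NF : None \notin F.
  by apply/negP => /(nrainbow_faded_centre e dE)/eqP; rewrite d_F add1n.
have c_F : (fun i => nrainbow e (copy_col c0 d i) (fibre F i)) =1 fun=> r.
  apply: leq_sum_eq => [j|].
    by rewrite -(extremal d d_pr d_r j) nrainbow_fade ?sub0set.
  have := nrainbow_windmill e dE NF; rewrite d_F sum_nat_const_ord => sum_F.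
  by rewrite -(leq_add2l 1) sum_F leq_add2r leq_b1.
rewrite (card_fibres NF) -sum_nat_const_ord; apply: leq_sum => i _.
apply: (bigmax_sup (copy_col c0 d i)).
  by rewrite copy_col_proper // (extremal d d_pr d_r i) eqxx.
by apply: (bigmax_sup (fibre F i)); rewrite ?(c_F i).
Qed.

Lemma f_minus_windmill : f_minus eW = m * f_minus e.
Proof.
have [c0 _] := chromatic_ex irr.
rewrite !f_minusE chi_windmill nrainbow_min_windmill.
apply/eqP; rewrite eqn_leq fading_windmill_ge andbT (fading_windmill_le (c0 := c0)) // => d d_pr.
rewrite (nrainbow_windmill0 c0 d_pr) -sum_nat_const_ord => /addnI sum_d i.
apply/esym; move: i; apply: leq_sum_eq => [i|]; last by rewrite sum_d.
by apply: leq_bigminn_cond; apply: copy_col_proper.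
Qed.

Lemma f_plus_windmill : f_plus eW = m * f_plus e.
Proof.
have [c0 _] := chromatic_ex irr.
rewrite !f_plusE chi_windmill nrainbow_max_windmill.
apply/eqP; rewrite eqn_leq fading_windmill_ge andbT (fading_windmill_le (c0 := c0)) // => d d_pr.
rewrite (nrainbow_windmill0 c0 d_pr) -sum_nat_const_ord => /addnI sum_d.
apply: leq_sum_eq => [i|]; last by rewrite sum_d.
by apply: leq_bigmax_cond; apply: copy_col_proper.
Qed.

End WindmillFading.

Unset Implicit Arguments.

Theorem mainTheorem10 (T : finType) (e : rel T) (m : nat) :
  symmetric e -> irreflexive e -> (forall x y : T, connect e x y) -> 0 < m ->
  f_minus (windmill_rel m e) = m * f_minus e /\
  f_plus (windmill_rel m e) = m * f_plus e.
Proof.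
by move=> sym irr _ m_gt0; split; [apply: f_minus_windmill | apply: f_plus_windmill].
Qed.
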